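(* Let $\alpha>0>\beta$ with $|\beta|<\alpha$, and put $\delta=\left(\frac{\alpha-\beta}{\alpha+\beta}\right)^2$ (so $\delta>1$) and $K=\frac{2\alpha}{(\alpha+\beta)^2}>0$. Let $\omega>0$, $\gamma>0$, $k_1>0$ with $k_1\neq 1$, and put $M=\delta^{\frac{1}{1-\delta}}-\delta^{\frac{\delta}{1-\delta}}$. For $T\ge 0$ define, for $s\in\mathbb{R}$ and $y>0$, $$\mathcal{G}_T(s,y)=\left(s-\frac{\ln y}{K}-T,\; y^{\delta}+\gamma\bigl(1+k_1\sin(2\omega s)\bigr)\right),$$ and consider the fixed points $(s,y)$ of $\mathcal{G}_T$ (i.e. $\mathcal{G}_T(s,y)=(s,y)$), where $s$ is taken modulo $\pi/\omega$. Then the curves $k_1=1$, $\gamma(1-k_1)=M$ and $\gamma(1+k_1)=M$ separate the first quadrant of the $(k_1,\gamma)$-plane into five regions with the following behaviour: (1) if $k_1\in(0,1)$ and $M<\gamma(1-k_1)$, then $\mathcal{G}_T$ has no fixed points for any $T$; (2) if $k_1\in(0,1)$ and $\gamma(1-k_1)<M<\gamma(1+k_1)$, then there are fixed points for each $T\in[T_1,T_2]$; (3) if $k_1\in(0,1)$ and $\gamma(1+k_1)<M$, then there are fixed points for each $T\in[T_1,T_2]\cup[T_3,T_4]$; (4) if $k_1>1$ and $M<\gamma(1+k_1)$, then there are fixed points for each $T\in(0,\infty)$; (5) if $k_1>1$ and $\gamma(1+k_1)<M$, then there are fixed points for each $T\in(0,T_1]\cup[T_2,\infty)$; where $0<T_1<T_2<T_3<T_4$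 are real numbers (depending on the parameters). Moreover, when fixed points exist for $T$ in an interval, there are exactly two fixed points (with $s$ modulo $\pi/\omega$) for each $T$ in the interior of the interval and only one for $T$ in the boundary of the interval. These qualitative features occur for every $\omega>0$: the sets of values of $T$ above and the $y$-coordinates of the fixed points do not depend on $\omega$, and only the coordinate $s$ of the fixed points depends on $\omega$.
   Context: The map $\mathcal{G}_T$ is obtained from an approximate first return map $G(s,y)$ of a periodically forced system by subtracting the auxiliary return time $T$ from the first coordinate; $\mathcal{G}_T$ commutes with the translation $s\mapsto s+\pi/\omega$, which is why fixed points are counted with $s$ modulo $\pi/\omega$. *)

From Stdlib Require Import Reals Lra.
Open Scope R_scope.

Definition delta (a b : R) : R := ((a - b) / (a + b)) ^ 2.
Definition Kc (a b : R) : R := 2 * a / (a + b) ^ 2.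
Definition Mc (a b : R) : R :=
  Rpower (delta a b) (1 / (1 - delta a b))
  - Rpower (delta a b) (delta a b / (1 - delta a b)).

Definition GT (a b om gam k1 T : R) (p : R * R) : R * R :=
  (fst p - ln (snd p) / Kc a b - T,
   Rpower (snd p) (delta a b) + gam * (1 + k1 * sin (2 * om * fst p))).

Definition is_fixed (a b om gam k1 T s y : R) : Prop :=
  0 < y /\ GT a b om gam k1 T (s, y) = (s, y).

(* fixed points counted with s modulo pi/omega: representatives s in [0, pi/omega) *)
Definition fixed_rep (a b om gam k1 T s y : R) : Prop :=
  0 <= s < PI / om /\ is_fixed a b om gam k1 T s y.

Definition has_fixed (a b om gam k1 T : R) : Prop :=
  exists s y, is_fixed a b om gam k1 T s y.

Definition exactly_one_fixed (a b om gam k1 T : R) : Prop :=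
  exists s y, fixed_rep a b om gam k1 T s y /\
    forall s' y', fixed_rep a b om gam k1 T s' y' -> s' = s /\ y' = y.

Definition exactly_two_fixed (a b om gam k1 T : R) : Prop :=
  exists s1 y1 s2 y2,
    fixed_rep a b om gam k1 T s1 y1 /\ fixed_rep a b om gam k1 T s2 y2 /\
    (s1, y1) <> (s2, y2) /\
    forall s y, fixed_rep a b om gam k1 T s y ->
      (s, y) = (s1, y1) \/ (s, y) = (s2, y2).

From Stdlib Require Import Reals Lra.
From Coquelicot Require Import Coquelicot.
Open Scope R_scope.

(* A fixed point of G_T must have y = exp (-K T) by the first coordinate, and the second
   coordinate then asks that y - y^delta = gam (1 + k1 sin (2 om s)).  Along y = exp (-K T)
   the left-hand side is a unimodal function of T >= 0 which vanishes at T = 0, tends to 0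
   at infinity and has maximum M.  Hence fixed points exist exactly when its value lies in
   [gam (1 - k1), gam (1 + k1)], the thresholds T_i solve "value = gam (1 +- k1)", and the
   count comes from sin t = c having two solutions in [0, 2 pi) when |c| < 1 and one when
   |c| = 1.  Rescaling s transports the fixed points from one omega to another. *)

Section Unimodal.

Variables (f : R -> R) (m : R).
Hypothesis f_cont : continuity f.
Hypothesis f_incr : forall x y, x < y <= m -> f x < f y.
Hypothesis f_decr : forall x y, m <= x < y -> f y < f x.

Lemma unimodal_le_max x : f x <= f m.
Proof.
  destruct (Rtotal_order x m) as [h | [-> | h]].
  - left; apply f_incr; lra.
  - lra.
  - left; apply f_decr; lra.
Qed.

Lemma unimodal_level_set L a b : a < m < b -> f a < L -> f b < L -> L < f m ->
  exists Ta Tb, a < Ta < m /\ m < Tb /\ f Ta = L /\ f Tb = L /\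
    (forall T, L <= f T <-> Ta <= T <= Tb) /\ (forall T, f T <= L <-> T <= Ta \/ Tb <= T) /\
    (forall T, L < f T <-> Ta < T < Tb) /\ (forall T, f T < L <-> T < Ta \/ Tb < T).
Proof.
  intros hab ha hb hm.
  assert (hL : continuity (fun _ => L)) by (apply continuity_const; intros ??; reflexivity).
  destruct (IVT (fun T => f T - L) a m) as [Ta [HTa fTa]];
    [now apply continuity_minus | lra | simpl; lra | simpl; lra |].
  destruct (IVT (fun T => L - f T) m b) as [Tb [HTb fTb]];
    [now apply continuity_minus | lra | simpl; lra | simpl; lra |].
  simpl in fTa, fTb.
  assert (Ta <> a) by (intros ->; lra).
  assert (Ta <> m) by (intros ->; lra).
  assert (Tb <> m) by (intros ->; lra).
  assert (htri : forall T, (f T < L /\ (T < Ta \/ Tb < T)) \/ (f T = L /\ (T = Ta \/ T = Tb))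
                          \/ (L < f T /\ Ta < T < Tb)).
  { intro T. destruct (Rtotal_order T Ta) as [h | [-> | h]].
    - left. split; [| lra]. replace L with (f Ta) by lra. apply f_incr; lra.
    - right; left. lra.
    - destruct (Rtotal_order T Tb) as [h' | [-> | h']].
      + right; right. split; [| lra]. destruct (Rle_or_lt T m).
        * replace L with (f Ta) by lra. apply f_incr; lra.
        * replace L with (f Tb) by lra. apply f_decr; lra.
      + right; left. lra.
      + left. split; [| lra]. replace L with (f Tb) by lra. apply f_decr; lra. }
  exists Ta, Tb.
  repeat split; try lra; intros; destruct (htri T) as [[? ?] | [[? ?] | [? ?]]]; lra.
Qed.

End Unimodal.

(* The value of y - y^d at y = exp (-K T). *)
Definition profile (K d T : R) : R := exp (-(K * T)) - exp (d * -(K * T)).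

Definition Tmax (K d : R) : R := ln d / ((d - 1) * K).

Section Profile.

Variables (K d : R).
Hypotheses (K_pos : 0 < K) (d_gt1 : 1 < d).

Lemma profile_derivative T :
  derivable_pt_lim (profile K d) T
    (K * d * exp (d * -(K * T)) * (1 - exp ((d - 1) * K * (T - Tmax K d)))).
Proof.
  apply is_derive_Reals. unfold profile. auto_derive; [easy |].
  replace ((d - 1) * K * (T - Tmax K d)) with ((d - 1) * K * T + - ln d)
    by (unfold Tmax; field; lra).
  replace (-(K * T)) with ((d - 1) * K * T + d * -(K * T)) at 1 by ring.
  rewrite !exp_plus, exp_Ropp, exp_ln by lra.
  field. lra.
Qed.

Lemma profile_continuous : continuity (profile K d).
Proof.
  intro T. apply derivable_continuous_pt. exact (exist _ _ (profile_derivative T)).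
Qed.

Lemma Tmax_pos : 0 < Tmax K d.
Proof.
  unfold Tmax. apply Rdiv_lt_0_compat.
  - rewrite <- ln_1. apply ln_increasing; lra.
  - apply Rmult_lt_0_compat; lra.
Qed.

Lemma profile_increasing x y : x < y <= Tmax K d -> profile K d x < profile K d y.
Proof.
  intros hxy.
  destruct (MVT_cor2 (profile K d) _ x y ltac:(lra) (fun c _ => profile_derivative c))
    as [c [E hc]].
  assert (hexp : (d - 1) * K * (c - Tmax K d) < 0).
  { assert (0 < (d - 1) * K) by (apply Rmult_lt_0_compat; lra).
    assert (c - Tmax K d < 0) by lra. nra. }
  apply exp_increasing in hexp. rewrite exp_0 in hexp.
  assert (0 < K * d * exp (d * -(K * c)) * (1 - exp ((d - 1) * K * (c - Tmax K d))) * (y - x))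
    by (repeat apply Rmult_lt_0_compat; try lra; apply exp_pos).
  lra.
Qed.

Lemma profile_decreasing x y : Tmax K d <= x < y -> profile K d y < profile K d x.
Proof.
  intros hxy.
  destruct (MVT_cor2 (profile K d) _ x y ltac:(lra) (fun c _ => profile_derivative c))
    as [c [E hc]].
  assert (hexp : 0 < (d - 1) * K * (c - Tmax K d)).
  { assert (0 < (d - 1) * K) by (apply Rmult_lt_0_compat; lra).
    assert (0 < c - Tmax K d) by lra. nra. }
  apply exp_increasing in hexp. rewrite exp_0 in hexp.
  assert (0 < K * d * exp (d * -(K * c)) * (exp ((d - 1) * K * (c - Tmax K d)) - 1) * (y - x))
    by (repeat apply Rmult_lt_0_compat; try lra; apply exp_pos).
  lra.
Qed.

Lemma profile_le_max T : profile K d T <= profile K d (Tmax K d).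
Proof. exact (unimodal_le_max _ _ profile_increasing profile_decreasing T). Qed.

Lemma profile_0 : profile K d 0 = 0.
Proof. unfold profile. rewrite Rmult_0_r, Ropp_0, Rmult_0_r. ring. Qed.

Lemma profile_pos T : 0 < T -> 0 < profile K d T.
Proof.
  intros hT. unfold profile.
  assert (0 < (d - 1) * (K * T)) by (apply Rmult_lt_0_compat; [lra | nra]).
  assert (exp (d * -(K * T)) < exp (-(K * T))) by (apply exp_increasing; lra).
  lra.
Qed.

Lemma profile_lt_exp T : profile K d T < exp (-(K * T)).
Proof. unfold profile. pose proof (exp_pos (d * -(K * T))). lra. Qed.

Lemma profile_level_set L : 0 < L < profile K d (Tmax K d) ->
  exists Ta Tb, 0 < Ta < Tmax K d /\ Tmax K d < Tb /\
    profile K d Ta = L /\ profile K d Tb = L /\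
    (forall T, L <= profile K d T <-> Ta <= T <= Tb) /\
    (forall T, profile K d T <= L <-> T <= Ta \/ Tb <= T) /\
    (forall T, L < profile K d T <-> Ta < T < Tb) /\
    (forall T, profile K d T < L <-> T < Ta \/ Tb < T).
Proof.
  intros hL. pose proof Tmax_pos.
  set (b := Tmax K d + 1 + Rabs (ln L) / K).
  assert (hb : -(K * b) < ln L).
  { pose proof (Rle_abs (- ln L)) as habs. rewrite Rabs_Ropp in habs.
    replace (K * b) with (K * (Tmax K d + 1) + Rabs (ln L)) by (unfold b; field; lra).
    nra. }
  apply exp_increasing in hb. rewrite exp_ln in hb by lra.
  apply (unimodal_level_set _ _ profile_continuous profile_increasing profile_decreasing L 0 b).
  - assert (0 <= Rabs (ln L) / K) by (apply Rdiv_le_0_compat; [apply Rabs_pos | lra]).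
    unfold b. lra.
  - rewrite profile_0. lra.
  - pose proof (profile_lt_exp b). lra.
  - lra.
Qed.

End Profile.

Definition asin_wrap (c : R) : R := if Rle_dec 0 (asin c) then asin c else 2 * PI + asin c.

Lemma asin_wrap_range c : 0 <= asin_wrap c < 2 * PI.
Proof.
  pose proof PI_RGT_0. pose proof (asin_bound c).
  unfold asin_wrap. destruct (Rle_dec 0 (asin c)); lra.
Qed.

Lemma sin_asin_wrap c : -1 <= c <= 1 -> sin (asin_wrap c) = c.
Proof.
  intros hc. unfold asin_wrap. destruct (Rle_dec 0 (asin c)).
  - now apply sin_asin.
  - rewrite sin_plus, sin_2PI, cos_2PI, sin_asin by exact hc. ring.
Qed.

Lemma sin_eq_on_period c t : -1 <= c <= 1 ->
  (0 <= t < 2 * PI /\ sin t = c) <-> (t = PI - asin c \/ t = asin_wrap c).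
Proof.
  intros hc. pose proof PI_RGT_0. split.
  - intros [ht <-]. unfold asin_wrap.
    destruct (Rle_or_lt t (PI / 2)) as [h1 | h1].
    + rewrite asin_sin by lra. destruct (Rle_dec 0 t); [right | ]; lra.
    + destruct (Rle_or_lt t (3 * (PI / 2))) as [h2 | h2].
      * left. rewrite <- sin_PI_x, asin_sin by lra. ring.
      * right. replace (sin t) with (sin (t - 2 * PI))
          by (rewrite sin_minus, sin_2PI, cos_2PI; ring).
        rewrite asin_sin by lra. destruct (Rle_dec 0 (t - 2 * PI)); lra.
  - intros [-> | ->].
    + pose proof (asin_bound c). split; [lra |]. rewrite sin_PI_x. now apply sin_asin.
    + split; [apply asin_wrap_range | now apply sin_asin_wrap].
Qed.

Lemma asin_wrap_eq_PI_minus c : -1 <= c <= 1 ->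
  asin_wrap c = PI - asin c <-> c = 1 \/ c = -1.
Proof.
  intros hc. pose proof PI_RGT_0. unfold asin_wrap. split.
  - destruct (Rle_dec 0 (asin c)); intro E.
    + left. rewrite <- (sin_asin c) by exact hc.
      replace (asin c) with (PI / 2) by lra. apply sin_PI2.
    + right. rewrite <- (sin_asin c) by exact hc.
      replace (asin c) with (- (PI / 2)) by lra. rewrite sin_neg, sin_PI2. ring.
  - intros [-> | ->].
    + rewrite asin_1. destruct (Rle_dec 0 (PI / 2)); lra.
    + replace (-1) with (- (1)) by ring. rewrite asin_opp, asin_1.
      destruct (Rle_dec 0 (- (PI / 2))); lra.
Qed.

Lemma sin_eq_on_half_period om c s : 0 < om -> -1 <= c <= 1 ->
  (0 <= s < PI / om /\ sin (2 * om * s) = c) <->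
  (s = (PI - asin c) / (2 * om) \/ s = asin_wrap c / (2 * om)).
Proof.
  intros hom hc.
  assert (hrange : 0 <= s < PI / om <-> 0 <= 2 * om * s < 2 * PI).
  { replace (2 * PI) with (2 * om * (PI / om)) by (field; lra).
    split; intros [? ?]; split; nra. }
  assert (hsol : forall t, s = t / (2 * om) <-> 2 * om * s = t)
    by (intro; split; [intros -> | intros <-]; field; lra).
  rewrite hrange, !hsol. now apply sin_eq_on_period.
Qed.

Lemma delta_gt1 a b : 0 < a -> b < 0 -> Rabs b < a -> 1 < delta a b.
Proof.
  intros ha hb hab. rewrite Rabs_left in hab by exact hb.
  assert (1 < (a - b) / (a + b)) by (apply Rlt_div_r; lra).
  unfold delta. simpl. nra.
Qed.

Lemma Kc_pos a b : b < 0 -> Rabs b < a -> 0 < Kc a b.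
Proof.
  intros hb hab. rewrite Rabs_left in hab by exact hb.
  unfold Kc. apply Rdiv_lt_0_compat; [lra | apply pow_lt; lra].
Qed.

Lemma Mc_eq_profile_max a b : 0 < Kc a b -> 1 < delta a b ->
  Mc a b = profile (Kc a b) (delta a b) (Tmax (Kc a b) (delta a b)).
Proof.
  intros hK hd. unfold Mc, Rpower, profile, Tmax. f_equal; f_equal; field; lra.
Qed.

Section FixedPoints.

Variables (a b gam k1 : R).
Hypotheses (hK : 0 < Kc a b) (hgam : 0 < gam) (hk1 : 0 < k1).

Local Notation p := (profile (Kc a b) (delta a b)).

Definition sine_level (T : R) : R := (p T - gam) / (gam * k1).

Lemma profile_sine_level T : p T = gam + gam * k1 * sine_level T.
Proof. unfold sine_level. field. lra. Qed.

Lemma is_fixed_iff om T s y :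
  is_fixed a b om gam k1 T s y <->
  y = exp (-(Kc a b * T)) /\ sin (2 * om * s) = sine_level T.
Proof.
  unfold is_fixed, GT, sine_level, profile, Rpower; simpl. split.
  - intros [hy E]. injection E as Es Ey.
    assert (hln : ln y = -(Kc a b * T)).
    { replace (ln y) with (ln y / Kc a b * Kc a b) by (field; lra). nra. }
    assert (hy' : y = exp (-(Kc a b * T))) by (rewrite <- hln, exp_ln; auto).
    split; [exact hy' |].
    rewrite hln in Ey. rewrite <- hy', <- Ey. field. lra.
  - intros [-> Esin]. split; [apply exp_pos |]. rewrite ln_exp. f_equal.
    + field. lra.
    + rewrite Esin. field. lra.
Qed.

Lemma fixed_rep_iff om T s y : 0 < om -> -1 <= sine_level T <= 1 ->
  fixed_rep a b om gam k1 T s y <->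
  y = exp (-(Kc a b * T)) /\
  (s = (PI - asin (sine_level T)) / (2 * om) \/ s = asin_wrap (sine_level T) / (2 * om)).
Proof.
  intros hom hc. unfold fixed_rep. rewrite is_fixed_iff, <- sin_eq_on_half_period by auto.
  tauto.
Qed.

Lemma has_fixed_iff om T : 0 < om ->
  has_fixed a b om gam k1 T <-> gam * (1 - k1) <= p T <= gam * (1 + k1).
Proof.
  intros hom. rewrite profile_sine_level.
  assert (0 < gam * k1) by nra.
  transitivity (-1 <= sine_level T <= 1).
  - split.
    + intros [s [y hfix]]. apply is_fixed_iff in hfix as [_ <-]. apply SIN_bound.
    + intros hc. exists ((PI - asin (sine_level T)) / (2 * om)), (exp (-(Kc a b * T))).
      apply (fixed_rep_iff om); auto.
  - split; intros [? ?]; split; nra.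
Qed.

Lemma exactly_two_fixed_of_between om T : 0 < om ->
  gam * (1 - k1) < p T < gam * (1 + k1) -> exactly_two_fixed a b om gam k1 T.
Proof.
  intros hom hT. rewrite profile_sine_level in hT.
  assert (hc : -1 < sine_level T < 1) by (assert (0 < gam * k1) by nra; split; nra).
  exists ((PI - asin (sine_level T)) / (2 * om)), (exp (-(Kc a b * T))),
         (asin_wrap (sine_level T) / (2 * om)), (exp (-(Kc a b * T))).
  rewrite !fixed_rep_iff by (auto; lra).
  split; [auto |]. split; [auto |]. split.
  - intro E. injection E as Es.
    assert (hwrap : asin_wrap (sine_level T) = PI - asin (sine_level T))
      by (apply (Rdiv_eq_reg_r (2 * om)); lra).
    apply asin_wrap_eq_PI_minus in hwrap; lra.
  - intros s y hfix. apply fixed_rep_iff in hfix as [-> [-> | ->]]; auto; lra.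
Qed.

Lemma exactly_one_fixed_of_edge om T : 0 < om ->
  p T = gam * (1 - k1) \/ p T = gam * (1 + k1) -> exactly_one_fixed a b om gam k1 T.
Proof.
  intros hom hT. rewrite profile_sine_level in hT.
  assert (hc : sine_level T = 1 \/ sine_level T = -1).
  { assert (0 < gam * k1) by nra.
    destruct hT; [right | left]; apply (Rmult_eq_reg_l (gam * k1)); auto; lra. }
  assert (hwrap := proj2 (asin_wrap_eq_PI_minus (sine_level T) ltac:(lra)) hc).
  exists ((PI - asin (sine_level T)) / (2 * om)), (exp (-(Kc a b * T))).
  rewrite fixed_rep_iff by (auto; lra).
  split; [auto |].
  intros s y hfix. rewrite fixed_rep_iff in hfix by (auto; lra).
  rewrite hwrap in hfix. tauto.
Qed.

Lemma fixed_y_omega_indep om om' T y : 0 < om -> 0 < om' ->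
  (exists s, is_fixed a b om gam k1 T s y) -> exists s, is_fixed a b om' gam k1 T s y.
Proof.
  intros hom hom' [s hfix]. exists (om * s / om'). rewrite is_fixed_iff in *.
  replace (2 * om' * (om * s / om')) with (2 * om * s) by (field; lra). exact hfix.
Qed.

Hypothesis hd : 1 < delta a b.

Local Notation M := (Mc a b).

Lemma no_fixed_points om T : 0 < om -> M < gam * (1 - k1) -> ~ has_fixed a b om gam k1 T.
Proof.
  intros hom hM. rewrite has_fixed_iff, Mc_eq_profile_max in * by auto.
  pose proof (profile_le_max _ _ hK hd T). lra.
Qed.

Lemma fixed_points_one_window :
  k1 < 1 -> gam * (1 - k1) < M -> M < gam * (1 + k1) ->
  exists T1 T2, 0 < T1 < T2 /\
  forall om, 0 < om ->
    (forall T, 0 <= T -> (has_fixed a b om gam k1 T <-> T1 <= T <= T2)) /\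
    (forall T, T1 < T < T2 -> exactly_two_fixed a b om gam k1 T) /\
    exactly_one_fixed a b om gam k1 T1 /\
    exactly_one_fixed a b om gam k1 T2.
Proof.
  intros hk hM1 hM2. rewrite Mc_eq_profile_max in * by auto.
  pose proof (profile_le_max _ _ hK hd) as hmax.
  destruct (profile_level_set _ _ hK hd (gam * (1 - k1))) as
    (T1 & T2 & h1 & h2 & hT1 & hT2 & hge & _ & hgt & _); [split; [nra | lra] |].
  exists T1, T2. split; [lra |]. intros om hom. split; [| split; [| split]].
  - intros T _. rewrite (has_fixed_iff om), <- hge by auto.
    pose proof (hmax T). split; intros; lra.
  - intros T hT. apply exactly_two_fixed_of_between; auto.
    pose proof (hmax T). apply hgt in hT. lra.
  - apply exactly_one_fixed_of_edge; auto.
  - apply exactly_one_fixed_of_edge; auto.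
Qed.

Lemma fixed_points_two_windows :
  k1 < 1 -> gam * (1 + k1) < M ->
  exists T1 T2 T3 T4, 0 < T1 < T2 /\ T2 < T3 < T4 /\
  forall om, 0 < om ->
    (forall T, 0 <= T -> (has_fixed a b om gam k1 T <->
                          (T1 <= T <= T2 \/ T3 <= T <= T4))) /\
    (forall T, (T1 < T < T2 \/ T3 < T < T4) -> exactly_two_fixed a b om gam k1 T) /\
    exactly_one_fixed a b om gam k1 T1 /\
    exactly_one_fixed a b om gam k1 T2 /\
    exactly_one_fixed a b om gam k1 T3 /\
    exactly_one_fixed a b om gam k1 T4.
Proof.
  intros hk hM. rewrite Mc_eq_profile_max in * by auto.
  assert (0 < gam * (1 - k1) < gam * (1 + k1)) by (split; nra).
  destruct (profile_level_set _ _ hK hd (gam * (1 - k1))) as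
    (T1 & T4 & h1 & h4 & hT1 & hT4 & hge & _ & hgt & _); [lra |].
  destruct (profile_level_set _ _ hK hd (gam * (1 + k1))) as
    (T2 & T3 & h2 & h3 & hT2 & hT3 & _ & hle & _ & hlt); [lra |].
  assert (T1 < T2 < T4) by (apply hgt; lra).
  assert (T1 < T3 < T4) by (apply hgt; lra).
  exists T1, T2, T3, T4. split; [lra | split; [lra |]].
  intros om hom. split; [| split; [| repeat split]].
  - intros T _. rewrite (has_fixed_iff om), hge, hle by auto. lra.
  - intros T hT. apply exactly_two_fixed_of_between; auto.
    split; [apply hgt | apply hlt]; lra.
  all: apply exactly_one_fixed_of_edge; auto.
Qed.

Lemma fixed_points_all_T :
  1 < k1 -> M < gam * (1 + k1) ->
  forall om, 0 < om ->
    (forall T, 0 < T -> has_fixed a b om gam k1 T) /\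
    (forall T, 0 < T -> exactly_two_fixed a b om gam k1 T).
Proof.
  intros hk hM om hom. rewrite Mc_eq_profile_max in * by auto.
  assert (gam * (1 - k1) < 0) by nra.
  split; intros T hT;
    pose proof (profile_le_max _ _ hK hd T); pose proof (profile_pos _ _ hK hd T hT).
  - apply (has_fixed_iff om); auto. lra.
  - apply exactly_two_fixed_of_between; auto. lra.
Qed.

Lemma fixed_points_outside_window :
  1 < k1 -> gam * (1 + k1) < M ->
  exists T1 T2, 0 < T1 < T2 /\
  forall om, 0 < om ->
    (forall T, 0 < T -> (has_fixed a b om gam k1 T <-> (T <= T1 \/ T2 <= T))) /\
    (forall T, (0 < T < T1 \/ T2 < T) -> exactly_two_fixed a b om gam k1 T) /\
    exactly_one_fixed a b om gam k1 T1 /\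
    exactly_one_fixed a b om gam k1 T2.
Proof.
  intros hk hM. rewrite Mc_eq_profile_max in * by auto.
  assert (gam * (1 - k1) < 0) by nra.
  destruct (profile_level_set _ _ hK hd (gam * (1 + k1))) as
    (T1 & T2 & h1 & h2 & hT1 & hT2 & _ & hle & _ & hlt); [split; [nra | lra] |].
  exists T1, T2. split; [lra |]. intros om hom. split; [| split; [| split]].
  - intros T hT. pose proof (profile_pos _ _ hK hd T hT).
    rewrite (has_fixed_iff om), <- hle by auto. split; intros; lra.
  - intros T hT. pose proof (profile_pos _ _ hK hd T ltac:(lra)).
    apply exactly_two_fixed_of_between; auto. split; [lra | apply hlt; lra].
  all: apply exactly_one_fixed_of_edge; auto.
Qed.

End FixedPoints.

Theorem theorem2 (a b gam k1 : R)
  (ha : 0 < a) (hb : b < 0) (hab : Rabs b < a)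
  (hgam : 0 < gam) (hk1 : 0 < k1) (hk1' : k1 <> 1) :
  (* (1) *)
  ((k1 < 1 -> Mc a b < gam * (1 - k1) ->
    forall om, 0 < om -> forall T, 0 <= T -> ~ has_fixed a b om gam k1 T)
  /\
  (* (2) *)
  (k1 < 1 -> gam * (1 - k1) < Mc a b -> Mc a b < gam * (1 + k1) ->
    exists T1 T2, 0 < T1 < T2 /\
    forall om, 0 < om ->
      (forall T, 0 <= T -> (has_fixed a b om gam k1 T <-> T1 <= T <= T2)) /\
      (forall T, T1 < T < T2 -> exactly_two_fixed a b om gam k1 T) /\
      exactly_one_fixed a b om gam k1 T1 /\
      exactly_one_fixed a b om gam k1 T2)
  /\
  (* (3) *)
  (k1 < 1 -> gam * (1 + k1) < Mc a b ->
    exists T1 T2 T3 T4, 0 < T1 < T2 /\ T2 < T3 < T4 /\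
    forall om, 0 < om ->
      (forall T, 0 <= T -> (has_fixed a b om gam k1 T <->
                            (T1 <= T <= T2 \/ T3 <= T <= T4))) /\
      (forall T, (T1 < T < T2 \/ T3 < T < T4) -> exactly_two_fixed a b om gam k1 T) /\
      exactly_one_fixed a b om gam k1 T1 /\
      exactly_one_fixed a b om gam k1 T2 /\
      exactly_one_fixed a b om gam k1 T3 /\
      exactly_one_fixed a b om gam k1 T4)
  /\
  (* (4) *)
  (1 < k1 -> Mc a b < gam * (1 + k1) ->
    forall om, 0 < om ->
      (forall T, 0 < T -> has_fixed a b om gam k1 T) /\
      (forall T, 0 < T -> exactly_two_fixed a b om gam k1 T))
  /\
  (* (5) *)
  (1 < k1 -> gam * (1 + k1) < Mc a b ->
    exists T1 T2, 0 < T1 < T2 /\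
    forall om, 0 < om ->
      (forall T, 0 < T -> (has_fixed a b om gam k1 T <-> (T <= T1 \/ T2 <= T))) /\
      (forall T, (0 < T < T1 \/ T2 < T) -> exactly_two_fixed a b om gam k1 T) /\
      exactly_one_fixed a b om gam k1 T1 /\
      exactly_one_fixed a b om gam k1 T2)
  /\
  (* the y-coordinates of the fixed points do not depend on omega *)
  (forall om om' T y, 0 < om -> 0 < om' ->
     ((exists s, is_fixed a b om gam k1 T s y) <->
      (exists s, is_fixed a b om' gam k1 T s y)))).
Proof.
  pose proof (delta_gt1 a b ha hb hab) as hd.
  pose proof (Kc_pos a b hb hab) as hK.
  split; [| split; [| split; [| split; [| split]]]].
  - intros _ hM om hom T _. exact (no_fixed_points a b gam k1 hK hgam hk1 hd om T hom hM).
  - exact (fixed_points_one_window a b gam k1 hK hgam hk1 hd).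
  - exact (fixed_points_two_windows a b gam k1 hK hgam hk1 hd).
  - exact (fixed_points_all_T a b gam k1 hK hgam hk1 hd).
  - exact (fixed_points_outside_window a b gam k1 hK hgam hk1 hd).
  - intros om om' T y hom hom'. split; apply fixed_y_omega_indep; auto.
Qed.
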